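(* Let $p>2$ be a prime and $d\geq 2$ an integer with $p-1=df$. Let $\omega$ be a fixed generator of $\mathbb{F}_p^*$, and for $i,j\in\mathbb{Z}/d\mathbb{Z}$ let $(i,j)=\#\{(u,v):0\leq u,v\leq f-1,\ 1+\omega^{du+i}\equiv\omega^{dv+j}\pmod p\}$. Let $\theta=0$ if $f$ is even and $\theta=d/2$ if $f$ is odd. Define the $d\times d$ matrix $M=(m_{ij})_{0\leq i,j\leq d-1}$ by $m_{ij}=0$ if $(i,j)=0$ and $m_{ij}=1$ otherwise, and write $M^n=(m^{(n)}_{ij})$. Then \[ g_d(p)=\max_{0\leq\alpha\leq d-1}\min\{s\mid m^{(s-1)}_{(\alpha+\theta)\,\theta}\neq0\}. \]
   Context: For $a\in\mathbb{F}_p^*$, $s_d(p,a)=\min\{k\mid a=\sum_{i=1}^k a_i^d,\ a_i\in\mathbb{F}_p^*\}$, and $g_d(p)=\max_{a\in\mathbb{F}_p^*}s_d(p,a)$. The index $\alpha+\theta$ is taken modulo $d$, and $M^0$ is the identity matrix. *)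

From HB Require Import structures.
From mathcomp Require Import all_boot all_order all_algebra.
Set Implicit Arguments. Unset Strict Implicit. Unset Printing Implicit Defensive.
Import Order.TTheory GRing.Theory Num.Theory.
Local Open Scope ring_scope.

Definition sum_dpow (p d : nat) (a : 'F_p) (k : nat) : bool :=
  [exists t : k.-tuple 'F_p,
     all (fun x => x != 0) t && (a == \sum_(x <- t) x ^+ d)].

Lemma sum_dpow_ex (p d : nat) (a : 'F_p) : exists k, sum_dpow d a k.
Proof.
case: (eqVneq a 0) => [->|a0].
  exists 0%N; apply/existsP; exists [tuple]; by rewrite big_nil.
exists (a : nat); apply/existsP; exists [tuple of nseq a (1 : 'F_p)].
apply/andP; split.
  by apply/allP => x /nseqP [-> _]; rewrite oner_eq0.
rewrite /= big_nseq expr1n iter_addr addr0.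
by rewrite natr_Zp.
Qed.

(* s_d(p,a) : least number of nonzero d-th powers summing to a
   (meaningful for a != 0, where k >= 1 automatically) *)
Definition s_d (p d : nat) (a : 'F_p) : nat := ex_minn (sum_dpow_ex d a).

Definition g_d (p d : nat) : nat := \max_(a : 'F_p | a != 0) s_d d a.

Definition cyclo (p d f : nat) (w : 'F_p) (i j : nat) : nat :=
  #|[set uv : 'I_f * 'I_f |
       1 + w ^+ (d * uv.1 + i)%N == w ^+ (d * uv.2 + j)%N]|.

Definition cycloM (p d f : nat) (w : 'F_p) : 'M[int]_d :=
  \matrix_(i < d, j < d) (if cyclo d f w i j == 0%N then 0 else 1).

Definition mxpow (d : nat) (A : 'M[int]_d) (n : nat) : 'M[int]_d :=
  iter n (mulmx A) 1%:M.

Definition ordmod (d : nat) (hd : (2 <= d)%N) (k : nat) : 'I_d :=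
  Ordinal (ltn_pmod k (ltnW hd)).

Definition least_nat (P : pred nat) (n : nat) : Prop :=
  P n /\ forall m, P m -> (n <= m)%N.

From HB Require Import structures.
From mathcomp Require Import all_boot all_order all_algebra.
From mathcomp Require Import finfield.
From mathcomp Require Import zify ring.
Set Implicit Arguments. Unset Strict Implicit. Unset Printing Implicit Defensive.
Import Order.TTheory GRing.Theory Num.Theory.
Local Open Scope ring_scope.

(* The nonzero d-th powers form the subgroup <w^d> of F_p^*, whose cosets are
   C_i = w^i <w^d>, and -1 lies in C_theta.  For x in C_i, some x + y^d with
   y != 0 lies in C_j exactly when the cyclotomic number (i,j) is nonzero, i.e.
   when m_ij != 0.  So if a lies in C_alpha and a = y_1^d + ... + y_s^d, the
   partial sums -a, -a + y_1^d, ... walk along the graph of M from C_(alpha+theta)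
   and reach C_theta, the coset of -y_s^d, within s - 1 steps; conversely a walk of
   length n yields a representation of a by n + 1 powers.  As M is nonnegative,
   such walks are detected by the nonzero entries of the powers of M. *)

Fixpoint walk {T : Type} (e : rel T) (n : nat) (x y : T) : Prop :=
  if n is n'.+1 then exists2 z, e x z & walk e n' z y else x = y.

Section NonnegativeMatrixPowers.

Variables (n : nat) (A : 'M[int]_n).
Hypothesis A_ge0 : forall i j, 0 <= A i j.

Lemma mxpowS k : mxpow A k.+1 = A *m mxpow A k.
Proof. by []. Qed.

Lemma mxpow_ge0 k i j : 0 <= mxpow A k i j.
Proof.
elim: k i j => [|k IHk] i j; first by rewrite /mxpow /= mxE ler0n.
by rewrite mxpowS mxE sumr_ge0 // => l _; rewrite mulr_ge0 ?A_ge0 ?IHk.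
Qed.

Lemma mxpow_neq0P k i j :
  mxpow A k i j != 0 <-> walk (fun i j => A i j != 0) k i j.
Proof.
elim: k i => [|k IHk] i.
  by rewrite /mxpow /= mxE pnatr_eq0 eqb0 negbK; split=> [/eqP|->].
have term_ge0 l : 0 <= A i l * mxpow A k l j by rewrite mulr_ge0 ?A_ge0 ?mxpow_ge0.
rewrite mxpowS mxE psumr_neq0 => [|l _]; last exact: term_ge0.
split=> [/hasP[l _] /=|[l Ail /IHk Alj]].
  rewrite lt0r mulf_eq0 negb_or => /andP[/andP[Ail Alj] _].
  by exists l; last exact/IHk.
apply/hasP; exists l; first exact: mem_index_enum.
by rewrite lt0r mulf_neq0 // term_ge0.
Qed.

End NonnegativeMatrixPowers.

Section Cosets.

Variables (F : finFieldType) (d f : nat) (w : F).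
Hypotheses (hdf : #|F|.-1 = (d * f)%N) (hw : (#|F|.-1).-primitive_root w).

Definition in_coset (x : F) (i : nat) : Prop := exists k, x = w ^+ (d * k + i).

Lemma df_gt0 : (0 < d * f)%N.
Proof. by rewrite -hdf (prim_order_gt0 hw). Qed.

Lemma f_gt0 : (0 < f)%N.
Proof. by have := df_gt0; rewrite muln_gt0 => /andP[]. Qed.

Lemma expw_neq0 i : w ^+ i != 0.
Proof. by rewrite expf_neq0 // (prim_root_eq0 hw) -lt0n (prim_order_gt0 hw). Qed.

Lemma expw_in_coset i : in_coset (w ^+ i) i.
Proof. by exists 0%N; rewrite muln0. Qed.

Lemma expw_surj x : x != 0 -> exists k, x = w ^+ k.
Proof.
move=> x_neq0; have q_gt0 := prim_order_gt0 hw.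
have /(prim_rootP hw) [k ->] : x ^+ #|F|.-1 = 1.
  by apply: (mulIf x_neq0); rewrite mul1r -exprSr prednK ?expf_card //; lia.
by exists k.
Qed.

Lemma expw_d_inv k : w ^+ (d * k) * w ^+ (d * (k * f.-1)) = 1.
Proof.
have f_pos := f_gt0.
rewrite -exprD (_ : (d * k + d * (k * f.-1) = d * f * k)%N); last by nia.
by rewrite exprM -hdf (prim_expr_order hw) expr1n.
Qed.

Lemma expw_shift k m i : w ^+ (d * (k + m) + i) = w ^+ (d * k + i) * w ^+ (d * m).
Proof. by rewrite -exprD; congr (_ ^+ _); ring. Qed.

Lemma expw_modf k i : w ^+ (d * k + i) = w ^+ (d * (k %% f) + i).
Proof.
rewrite {1}(divn_eq k f) (addnC (_ * f)%N) expw_shift (mulnC _ f)%N mulnA.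
by rewrite -hdf exprM (prim_expr_order hw) expr1n mulr1.
Qed.

Lemma in_coset_exists x : x != 0 -> exists i : 'I_d, in_coset x i.
Proof.
case/expw_surj=> k ->; have d_gt0 : (0 < d)%N by have := df_gt0; lia.
exists (Ordinal (ltn_pmod k d_gt0)); exists (k %/ d)%N.
by rewrite /= mulnC -divn_eq.
Qed.

Lemma in_coset_uniq x (i j : 'I_d) : in_coset x i -> in_coset x j -> i = j.
Proof.
case=> k -> [l] /eqP; rewrite (eq_prim_root_expr hw) hdf => /eqP Ekl.
apply: ord_inj; rewrite -(modn_small (ltn_ord i)) -(modn_small (ltn_ord j)).
have /(congr1 (modn^~ d)) := Ekl; rewrite !modn_dvdm ?dvdn_mulr //.
by rewrite ![(d * _)%N]mulnC !modnMDl.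
Qed.

Lemma in_coset_mul x y i j :
  in_coset x i -> in_coset y j -> in_coset (x * y) (i + j).
Proof.
by case=> k -> [l ->]; exists (k + l)%N; rewrite -exprD; congr (_ ^+ _); ring.
Qed.

Lemma in_coset_modn x i : in_coset x i -> in_coset x (i %% d).
Proof.
case=> k ->; exists (k + i %/ d)%N; congr (_ ^+ _).
by rewrite {1}(divn_eq i d); ring.
Qed.

Lemma in_coset0_dpowP x : in_coset x 0 <-> exists2 y, y != 0 & x = y ^+ d.
Proof.
split=> [[k ->]|[y /expw_surj[k ->] ->]].
  by exists (w ^+ k); rewrite ?expw_neq0 // addn0 -exprM mulnC.
by exists k; rewrite addn0 -exprM mulnC.
Qed.

Hypothesis F_odd : odd #|F|.

Let theta := if odd f then d./2 else 0%N.

Lemma df_even : ~~ odd (d * f).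
Proof. by rewrite -hdf; have := prim_order_gt0 hw; lia. Qed.

Lemma half_df : ((d * f)./2 = d * f./2 + theta)%N.
Proof.
have := df_even; rewrite /theta oddM; case: ifP => [f_odd|f_even _].
  rewrite andbT => d_even.
  have [a ->] : exists a, d = (a * 2)%N by exists d./2; lia.
  have [b ->] : exists b, f = (b * 2).+1 by exists f./2; lia.
  nia.
have [b ->] : exists b, f = (b * 2)%N by exists f./2; lia.
nia.
Qed.

Lemma theta_double : ((theta + theta) %% d = 0)%N.
Proof.
have := df_even; rewrite /theta oddM; case: ifP => [f_odd|_ _]; last by rewrite mod0n.
by rewrite andbT => d_even; rewrite (_ : (d./2 + d./2 = d)%N) ?modnn //; lia.
Qed.

Lemma opp1_in_coset : in_coset (-1) theta.
Proof.
have two_dvd_q : (2 %| #|F|.-1)%N by rewrite hdf dvdn2 df_even.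
have w2 := dvdn_prim_root hw two_dvd_q.
have /eqP := prim_expr_order w2; rewrite sqrf_eq1.
have -> : (w ^+ (#|F|.-1 %/ 2) == 1) = false.
  by rewrite -[_ ^+ _]expr1 -(prim_order_dvd w2).
by move=> /= /eqP <-; exists f./2; rewrite divn2 hdf half_df.
Qed.

Lemma in_coset_opp x i : in_coset x i -> in_coset (- x) ((i + theta) %% d).
Proof.
move=> x_i; apply: in_coset_modn; rewrite -mulN1r addnC.
exact: in_coset_mul opp1_in_coset x_i.
Qed.

Lemma in_coset_thetaP x :
  in_coset x (theta %% d) <-> exists2 y, y != 0 & x + y ^+ d = 0.
Proof.
split=> [/in_coset_opp|[y y_neq0 /eqP]].
  rewrite modnDml theta_double => /in_coset0_dpowP[y y_neq0 Ey].
  by exists y; rewrite // -Ey addrN.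
rewrite addr_eq0 => /eqP ->; rewrite -(add0n theta).
by apply: in_coset_opp; apply/in_coset0_dpowP; exists y.
Qed.

End Cosets.

Lemma least_nat_unique (P : pred nat) m n : least_nat P m -> least_nat P n -> m = n.
Proof. by case=> Pm m_min [Pn n_min]; apply/anti_leq; rewrite m_min ?n_min. Qed.

Lemma sum_dpow_s_d p d (a : 'F_p) : sum_dpow d a (s_d d a).
Proof. by rewrite /s_d; case: ex_minnP. Qed.

Lemma s_d_min p d (a : 'F_p) s : sum_dpow d a s -> (s_d d a <= s)%N.
Proof. by rewrite /s_d; case: ex_minnP => m _; apply. Qed.

Section CyclotomicMatrix.

Variables (p d f : nat) (w : 'F_p).
Hypotheses (hp : prime p) (hp2 : (2 < p)%N) (hd : (2 <= d)%N).
Hypotheses (hdf : p.-1 = (d * f)%N) (hw : (p.-1).-primitive_root w).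

Let hdfF : #|'F_p|.-1 = (d * f)%N. Proof. by rewrite card_Fp. Qed.
Let hwF : (#|'F_p|.-1).-primitive_root w. Proof. by rewrite card_Fp. Qed.
Let F_odd : odd #|'F_p|.
Proof. by rewrite card_Fp //; have := even_prime hp; lia. Qed.

Lemma cyclo_neq0P x i j : in_coset d w x i ->
  cyclo d f w i j != 0%N <-> exists2 y, y != 0 & in_coset d w (x + y ^+ d) j.
Proof.
have f_gt0 := f_gt0 hdfF hwF.
case=> k ->; rewrite -lt0n card_gt0; split.
- case/set0Pn => -[u v]; rewrite inE /= => /eqP Euv.
  set m := (k + u * f.-1)%N.
  exists (w ^+ m); first exact: (expw_neq0 hwF).
  exists (v + m)%N; rewrite -exprM (mulnC m d) expw_shift -Euv mulrDl mul1r.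
  rewrite -expw_shift addrC (expw_modf hdfF hwF) [in RHS](expw_modf hdfF hwF).
  by rewrite (_ : u + m = u * f + k)%N ?modnMDl //; nia.
- case=> y y_neq0 [l Exy]; have [e ye] := expw_surj hdfF hwF y_neq0.
  apply/set0Pn; exists (Ordinal (ltn_pmod (k + e * f.-1) f_gt0),
                        Ordinal (ltn_pmod (l + e * f.-1) f_gt0)).
  rewrite inE /= -!(expw_modf hdfF hwF) !expw_shift -Exy mulrDl ye -exprM.
  by rewrite (mulnC e d) (expw_d_inv hdfF hwF) addrC.
Qed.

Let theta := if odd f then d./2 else 0%N.
Local Notation edge := (fun i j : 'I_d => cycloM d f w i j != 0).
Local Notation T := (ordmod hd theta).

Lemma cycloM_ge0 i j : 0 <= cycloM d f w i j.
Proof. by rewrite mxE; case: ifP. Qed.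

Lemma cycloM_neq0 i j : (cycloM d f w i j != 0) = (cyclo d f w i j != 0%N).
Proof. by rewrite mxE; case: ifP; rewrite ?eqxx ?oner_eq0. Qed.

Lemma walk_of_zero_sum (t : seq 'F_p) x (i : 'I_d) :
  x != 0 -> in_coset d w x i -> all (fun y => y != 0) t ->
  x + \sum_(y <- t) y ^+ d = 0 -> exists2 n, (n < size t)%N & walk edge n i T.
Proof.
elim: t x i => [|y t IHt] x i x_neq0 x_i.
  by move=> _; rewrite big_nil addr0 => /eqP; rewrite (negPf x_neq0).
rewrite /= big_cons addrA => /andP[y_neq0 t_neq0] sum0.
have [xy0|xy_neq0] := eqVneq (x + y ^+ d) 0.
  exists 0%N => //=; apply: (in_coset_uniq hdfF hwF x_i).
  by apply/(in_coset_thetaP hdfF hwF F_odd); exists y.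
have [j xy_j] := in_coset_exists hdfF hwF xy_neq0.
have [n lt_nt walk_j] := IHt _ _ xy_neq0 xy_j t_neq0 sum0.
exists n.+1 => //; exists j => //.
by rewrite cycloM_neq0; apply/(cyclo_neq0P _ x_i); exists y.
Qed.

Lemma zero_sum_of_walk n x (i : 'I_d) : in_coset d w x i -> walk edge n i T ->
  exists t : seq 'F_p, [/\ size t = n.+1, all (fun y => y != 0) t &
    x + \sum_(y <- t) y ^+ d = 0].
Proof.
elim: n x i => [|n IHn] x i x_i /=.
  move=> iT; rewrite iT in x_i.
  have [y y_neq0 xy0] := (in_coset_thetaP hdfF hwF F_odd x).1 x_i.
  by exists [:: y]; rewrite /= big_seq1 y_neq0.
case=> j /[!cycloM_neq0] /(cyclo_neq0P _ x_i) [y y_neq0 xy_j] /(IHn _ _ xy_j).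
case=> t [size_t t_neq0 sum0]; exists (y :: t).
by rewrite /= size_t y_neq0 big_cons addrA.
Qed.

Lemma opp_in_coset_shift a (alpha : 'I_d) :
  in_coset d w a alpha -> in_coset d w (- a) (ordmod hd (alpha + theta)).
Proof. exact: in_coset_opp hdfF hwF F_odd a alpha. Qed.

Lemma walk_of_sum_dpow a (alpha : 'I_d) s : a != 0 -> in_coset d w a alpha ->
  sum_dpow d a s -> exists2 n, (n < s)%N & walk edge n (ordmod hd (alpha + theta)) T.
Proof.
move=> a_neq0 /opp_in_coset_shift na_alpha.
case/existsP=> t /andP[t_neq0 /eqP sum_t]; rewrite -(size_tuple t).
apply: (walk_of_zero_sum _ na_alpha t_neq0); first by rewrite oppr_eq0.
by rewrite sum_t addNr.
Qed.

Lemma sum_dpow_of_walk a (alpha : 'I_d) n : in_coset d w a alpha ->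
  walk edge n (ordmod hd (alpha + theta)) T -> sum_dpow d a n.+1.
Proof.
move=> /opp_in_coset_shift na_alpha.
case/(zero_sum_of_walk na_alpha) => t [size_t t_neq0 sum0].
apply/existsP; exists (Tuple (introT eqP size_t)); rewrite /= t_neq0 /=.
by rewrite eq_sym -subr_eq0 addrC sum0.
Qed.

Lemma s_d_least a (alpha : 'I_d) : a != 0 -> in_coset d w a alpha ->
  least_nat (fun s => (0 < s)%N &&
    (mxpow (cycloM d f w) (s - 1) (ordmod hd (alpha + theta)) T != 0)) (s_d d a).
Proof.
move=> a_neq0 a_alpha; have walkP := mxpow_neq0P cycloM_ge0.
split=> [|m /andP[m_gt0 /walkP]]; last first.
  by rewrite subn1 => /(sum_dpow_of_walk a_alpha); rewrite prednK //; apply: s_d_min.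
have [n lt_ns walk_n] := walk_of_sum_dpow a_neq0 a_alpha (sum_dpow_s_d d a).
have /eqP -> : s_d d a == n.+1.
  by rewrite eqn_leq lt_ns s_d_min // (sum_dpow_of_walk a_alpha walk_n).
by rewrite subn1 /=; apply/walkP.
Qed.

Lemma g_d_max_cosets : g_d p d = \max_(alpha < d) s_d d (w ^+ alpha).
Proof.
have s_d_coset a (alpha : 'I_d) : a != 0 -> in_coset d w a alpha ->
    s_d d a = s_d d (w ^+ alpha).
  move=> a_neq0 a_alpha; apply: least_nat_unique (s_d_least a_neq0 a_alpha) _.
  exact: s_d_least (expw_neq0 hwF _) (expw_in_coset _ _ _).
apply/anti_leq/andP; split.
  apply/bigmax_leqP => a a_neq0.
  have [alpha a_alpha] := in_coset_exists hdfF hwF a_neq0.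
  by rewrite (s_d_coset a alpha) //; apply: (leq_bigmax alpha).
by apply/bigmax_leqP => alpha _; apply: leq_bigmax_cond; apply: expw_neq0 hwF _.
Qed.

End CyclotomicMatrix.

Theorem theorem2 (p d f : nat) (w : 'F_p)
  (hp : prime p) (hp2 : (2 < p)%N) (hd : (2 <= d)%N) (hdf : p.-1 = (d * f)%N)
  (hw : (p.-1).-primitive_root w) :
  let theta := if odd f then d./2 else 0%N in
  exists h : 'I_d -> nat,
    (forall alpha : 'I_d,
       least_nat (fun s => (0 < s)%N &&
         (mxpow (cycloM d f w) (s - 1) (ordmod hd (alpha + theta)) (ordmod hd theta) != 0))
         (h alpha)) /\
    g_d p d = \max_(alpha < d) h alpha.
Proof.
move=> theta; exists (fun alpha => s_d d (w ^+ alpha)).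
split; last exact: g_d_max_cosets hp hp2 hd hdf hw.
have hwF : (#|'F_p|.-1).-primitive_root w by rewrite card_Fp.
move=> alpha; apply: (s_d_least hp hp2 hd hdf hw).
  exact: expw_neq0 hwF _.
exact: expw_in_coset.
Qed.
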